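(* Let $a\in\mathbb{Q}$ with $1\le a<4$. Define $b_0=\frac{a+1}{2}$ and $b_{i+1}=\mathrm{approx}\!\left(\frac{a+b_i^2}{2b_i},\,2^{-2^{i+1}-1}\right)$. Define $x:\mathbb{Q}^+\to\mathbb{Q}$ by $x(\varepsilon)=b_n$, where $n$ is the least natural number such that $2^{-2^n}\le\varepsilon$. Then $x$ is a regular function, i.e. $|x(\varepsilon_1)-x(\varepsilon_2)|\le\varepsilon_1+\varepsilon_2$ for all $\varepsilon_1,\varepsilon_2\in\mathbb{Q}^+$.
   Context: $\mathbb{Q}^+$ denotes the strictly positive rationals. For rationals in lowest terms, $\frac{n_1}{d_1}$ is simpler than $\frac{n_2}{d_2}$ if $|n_1|+|d_1|<|n_2|+|d_2|$; every closed rational interval contains a unique simplest rational. For $c\in\mathbb{Q}$, $\varepsilon\in\mathbb{Q}^+$, $\mathrm{approx}(c,\varepsilon)$ is the simplest rational number in $[c-\varepsilon,c+\varepsilon]$. *)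

From mathcomp Require Import all_boot all_order all_algebra.
Set Implicit Arguments. Unset Strict Implicit. Unset Printing Implicit Defensive.
Import Order.TTheory GRing.Theory Num.Theory.
Local Open Scope ring_scope.

Definition cplx (q : rat) : nat := (`|numq q|%N + `|denq q|%N)%N.

Definition inI (c e q : rat) : bool := (c - e <= q) && (q <= c + e).

(* all rationals +- i/(n-i), 0 <= i < n : every rational of complexity n
   occurs here, and every element has complexity <= n *)
Definition cands (n : nat) : seq rat :=
  [seq (i%:R / (n - i)%:R : rat) | i <- iota 0 n] ++
  [seq (- (i%:R / (n - i)%:R) : rat) | i <- iota 0 n].

(* approx c e = the simplest rational in [c - e, c + e] (for e > 0).
   Search over complexities n = 0 .. cplx c (c itself has complexity cplx c,
   so the search always succeeds for e >= 0); at the least n for which the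
   interval meets cands n, the elements found have complexity exactly n,
   i.e. they are the simplest ones (unique by the standing fact). *)
Definition approx (c e : rat) : rat :=
  let n0 := find (fun n => has (inI c e) (cands n)) (iota 0 (cplx c).+1) in
  nth 0 (filter (inI c e) (cands n0)) 0.

Fixpoint bsq (a : rat) (i : nat) : rat :=
  match i with
  | 0 => (a + 1) / 2
  | i'.+1 => let b := bsq a i' in
             approx ((a + b ^+ 2) / (2 * b)) ((2 ^+ (2 ^ i).+1)^-1)
  end.

(* least n with 2^(-2^n) <= eps; for eps > 0 such n is <= denq eps,
   so searching n in 0 .. denq eps finds the least one. *)
Definition least_n (eps : rat) : nat :=
  find (fun n => (2 ^+ (2 ^ n))^-1 <= eps) (iota 0 `|denq eps|%N.+1).

Definition xfun (a eps : rat) : rat := bsq a (least_n eps).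

From Pilot Require Import Defs.
From mathcomp Require Import all_boot all_order all_algebra ring lra realalg.
(* [realalg] exports an [approx] of its own, hence [Defs.approx] below. *)

Set Implicit Arguments.
Unset Strict Implicit.

Import Order.TTheory GRing.Theory Num.Theory.
Local Open Scope ring_scope.

(* The b_i approximate s = sqrt a with b_i - s in [-t_i/2, t_i], t_i = 2^(-2^i).
   The exact Newton iterate (a + b^2)/(2b) exceeds s by (b - s)^2/(2b), which
   is at most t_i^2/2 = t_(i+1)/2, and rounding with tolerance t_(i+1)/2 moves
   it by at most as much again.  Hence |b_n - b_m| <= t_n + t_m, and x(eps)
   uses an index n with t_n <= eps. *)

Lemma find_iota_sat (P : pred nat) (n : nat) : P n -> P (find P (iota 0 n.+1)).
Proof.
move=> Pn; have hasP_n : has P (iota 0 n.+1).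
  by apply/hasP; exists n; rewrite ?mem_iota ?add0n ?ltnSn.
have find_lt : (find P (iota 0 n.+1) < n.+1)%N by rewrite has_find size_iota in hasP_n.
by have := nth_find 0 hasP_n; rewrite nth_iota.
Qed.

Lemma mem_cands_cplx (c : rat) : c \in cands (cplx c).
Proof.
rewrite /cands /cplx mem_cat.
have den_gt0 := denq_gt0 c.
have num_lt : (`|numq c| < `|numq c| + `|denq c|)%N.
  by rewrite -{1}[`|numq c|%N]addn0 ltn_add2l absz_gt0 gt_eqF.
have den_nat : ((`|numq c| + `|denq c|) - `|numq c|)%N%:R = (denq c)%:~R :> rat.
  by rewrite addKn natr_absz gtr0_norm.
case: (lerP 0 (numq c)) => num_sign; apply/orP; [left | right];
  apply/mapP; exists `|numq c|%N; rewrite ?mem_iota // den_nat natr_absz;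
  rewrite -{1}[c]divq_num_den.
- by rewrite ger0_norm.
- by rewrite ltr0_norm // mulrNz mulNr opprK.
Qed.

Lemma inI_approx (c e : rat) : 0 <= e -> inI c e (Defs.approx c e).
Proof.
move=> e_ge0; rewrite /Defs.approx.
set n0 := find _ _.
have : has (inI c e) (cands n0).
  apply: (find_iota_sat (P := fun n => has (inI c e) (cands n))).
  by apply/hasP; exists c; rewrite ?mem_cands_cplx // /inI gerBl e_ge0 lerDl.
rewrite has_filter -size_eq0 -lt0n => /(mem_nth 0).
by rewrite mem_filter => /andP[].
Qed.

Lemma inI_ratr (F : numFieldType) (c e q : rat) :
  inI c e q -> ratr c - ratr e <= (ratr q : F) <= ratr c + ratr e.
Proof. by rewrite /inI -!(ler_rat F) rmorphB rmorphD. Qed.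

Lemma newton_step_err (R : realFieldType) (s B t : R) :
  1 <= s -> 0 < t <= 1 / 2 -> - (t / 2) <= B - s <= t ->
  0 <= (s ^+ 2 + B ^+ 2) / (2 * B) - s <= t ^+ 2 / 2.
Proof.
move=> s_ge1 /andP[t_gt0 t_le] /andP[err_lo err_hi].
have B_gt0 : 0 < B by lra.
have -> : (s ^+ 2 + B ^+ 2) / (2 * B) - s = (B - s) ^+ 2 / (2 * B).
  by field; rewrite gt_eqF.
have twoB_gt0 : 0 < 2 * B by lra.
rewrite divr_ge0 ?sqr_ge0 ?(ltW twoB_gt0) ?ler_pdivrMr //=.
suff : (B - s) ^+ 2 <= t ^+ 2 * B by lra.
case: (lerP s B) => [s_le_B | B_lt_s].
- have : (B - s) ^+ 2 <= t ^+ 2 by rewrite ler_sqr ?nnegrE; lra.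
  have : t ^+ 2 * 1 <= t ^+ 2 * B by rewrite ler_wpM2l ?sqr_ge0 //; lra.
  lra.
- have : (s - B) ^+ 2 <= (t / 2) ^+ 2.
    by rewrite ler_sqr ?nnegrE; lra.
  have : t ^+ 2 * (1 / 4) <= t ^+ 2 * B by rewrite ler_wpM2l ?sqr_ge0 //; lra.
  lra.
Qed.

Definition tol (i : nat) : rat := (2 ^+ (2 ^ i))^-1.

Lemma tolS i : tol i.+1 = tol i ^+ 2.
Proof. by rewrite /tol expnS mulnC exprM exprVn. Qed.

Lemma tol_gt0 i : 0 < tol i.
Proof. by rewrite invr_gt0 exprn_gt0. Qed.

Lemma tol_le_half i : tol i <= 1 / 2.
Proof.
rewrite mul1r lef_pV2 ?posrE ?exprn_gt0 // -natrX (ler_nat rat 2).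
by rewrite -{1}(expn1 2) leq_pexp2l // expn_gt0.
Qed.

Lemma bsqS (a : rat) i :
  bsq a i.+1 = Defs.approx ((a + bsq a i ^+ 2) / (2 * bsq a i)) (tol i ^+ 2 / 2).
Proof. by rewrite /= -tolS; congr Defs.approx; rewrite exprS invfM mulrC. Qed.

Lemma bsq_sub_sqrt (R : realFieldType) (a : rat) (s : R) i :
  s ^+ 2 = ratr a -> 1 <= s <= 2 ->
  - (ratr (tol i) / 2) <= ratr (bsq a i) - s <= ratr (tol i).
Proof.
move=> s_sq /andP[s_ge1 s_le2].
elim: i => [|i IH].
  have -> : ratr (tol 0) = 1 / 2 :> R by rewrite /tol expn0 expr1 mul1r fmorphV rmorph_nat.
  have -> : ratr (bsq a 0) = (ratr a + 1) / 2 :> R.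
    by rewrite fmorph_div rmorphD rmorph1 rmorph_nat.
  have := sqr_ge0 (s - 1).
  have : s * s <= 2 * s by apply: ler_wpM2r; lra.
  rewrite -s_sq; lra.
have tol_bounds : 0 < (ratr (tol i) : R) <= 1 / 2.
  have := tol_le_half i; rewrite -(ler_rat R) fmorph_div rmorph1 rmorph_nat.
  by rewrite ltr0q tol_gt0.
have /andP[newton_lo newton_hi] := newton_step_err s_ge1 tol_bounds IH.
rewrite bsqS tolS.
set c := (a + bsq a i ^+ 2) / (2 * bsq a i).
have c_newton : ratr c = (s ^+ 2 + ratr (bsq a i) ^+ 2) / (2 * ratr (bsq a i)) :> R.
  by rewrite s_sq fmorph_div rmorphD rmorphXn rmorphM rmorph_nat.
have /(@inI_ratr R)/andP[approx_lo approx_hi] :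
    inI c (tol i ^+ 2 / 2) (Defs.approx c (tol i ^+ 2 / 2)).
  by apply: inI_approx; rewrite divr_ge0 ?sqr_ge0.
move: approx_lo approx_hi; rewrite c_newton fmorph_div !rmorphXn rmorph_nat.
lra.
Qed.

Lemma bsq_dist (a : rat) n m : 1 <= a <= 4 -> `|bsq a n - bsq a m| <= tol n + tol m.
Proof.
move=> /andP[a_ge1 a_le4].
pose s := Num.sqrt (ratr a : realalg).
have s_sq : s ^+ 2 = ratr a by rewrite sqr_sqrtr // ler0q; lra.
have s_bounds : 1 <= s <= 2.
  have : ratr 1 <= (ratr a : realalg) <= ratr 4 by rewrite !ler_rat a_ge1.
  rewrite rmorph1 rmorph_nat -s_sq => /andP[s_sq_ge1 s_sq_le4].
  have := sqrtr_ge0 (ratr a : realalg); rewrite -/s => s_ge0.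
  by apply/andP; split; nra.
have := bsq_sub_sqrt n s_sq s_bounds; have := bsq_sub_sqrt m s_sq s_bounds.
have := tol_gt0 n; have := tol_gt0 m; rewrite -!(ltr0q realalg).
rewrite -(ler_rat realalg) ratr_norm rmorphB rmorphD ler_norml.
lra.
Qed.

Lemma tol_le_invn n : (0 < n)%N -> tol n <= n%:R^-1.
Proof.
move=> n_gt0; rewrite lef_pV2 ?posrE ?ltr0n ?exprn_gt0 // -natrX ler_nat.
exact: leq_trans (ltnW (ltn_expl n (ltnSn 1))) (ltnW (ltn_expl _ (ltnSn 1))).
Qed.

Lemma invr_denq_le (e : rat) : 0 < e -> (denq e)%:~R^-1 <= e.
Proof.
move=> e_gt0; rewrite -{2}[e]divq_num_den -[X in X <= _]mul1r.
apply: ler_wpM2r; first by rewrite invr_ge0 ler0z ltW ?denq_gt0.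
by rewrite ler1z -gtz0_ge1 numq_gt0.
Qed.

Lemma tol_least_n_le (e : rat) : 0 < e -> tol (least_n e) <= e.
Proof.
move=> e_gt0; apply: (find_iota_sat (P := fun n => tol n <= e)).
apply: le_trans (invr_denq_le e_gt0).
have den_nat : (`|denq e|%N)%:R = (denq e)%:~R :> rat.
  by rewrite natr_absz gtr0_norm ?denq_gt0.
by rewrite -den_nat tol_le_invn // absz_gt0 denq_neq0.
Qed.

Theorem theorem38 (a : rat) (ha : 1 <= a) (ha4 : a < 4) :
  forall e1 e2 : rat, 0 < e1 -> 0 < e2 ->
    `|xfun a e1 - xfun a e2| <= e1 + e2.
Proof.
move=> e1 e2 e1_gt0 e2_gt0.
apply: le_trans (bsq_dist _ _ _) _; first by rewrite ha ltW.
by rewrite lerD ?tol_least_n_le.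
Qed.
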